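(* Let $(M_0,d,\Gamma)$ be a cone-like space and let $\{x_n\}$ be a Cauchy sequence in $(M_0,d)$ which does not converge in $M_0$. Then there exist $x\in M_0$ and a sequence $\{f_n\}$ of elements of $\Gamma$ with $\lim_{n\to\infty}\rho(f_n)=0$ such that the Cauchy sequences $\{x_n\}$ and $\{f_n(x)\}$ are equivalent.
   Context: A cone-like space is a locally compact metric space $(M_0,d)$ together with a finitely generated, non-trivial group $\Gamma$ acting freely and properly discontinuously on $M_0$ by homotheties (i.e. for each $f\in\Gamma$ there is $\rho(f)>0$ with $d(f(x),f(y))=\rho(f)d(x,y)$ for all $x,y$), such that the identity is the only element of $\Gamma$ acting as an isometry, and such that the quotient $M_0/\Gamma$ is compact. Two Cauchy sequences $\{a_n\},\{b_n\}$ are equivalent if $d(a_n,b_n)\to0$. *)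

From Stdlib Require Import Reals List.
Open Scope R_scope.

Section Defs.
Variable M : Type.
Variable d : M -> M -> R.

Definition is_metric : Prop :=
  (forall x y, 0 <= d x y) /\
  (forall x y, d x y = 0 <-> x = y) /\
  (forall x y, d x y = d y x) /\
  (forall x y z, d x z <= d x y + d y z).

Definition ball (x : M) (r : R) : M -> Prop := fun y => d x y < r.

Definition is_open (U : M -> Prop) : Prop :=
  forall x, U x -> exists r, 0 < r /\ forall y, ball x r y -> U y.

Definition is_compact (K : M -> Prop) : Prop :=
  forall (I : Type) (U : I -> M -> Prop),
    (forall i, is_open (U i)) ->
    (forall x, K x -> exists i, U i x) ->
    exists l : list I, forall x, K x -> exists i, In i l /\ U i x.

Definition locally_compact : Prop :=
  forall x, exists K, is_compact K /\ exists r, 0 < r /\ forall y, ball x r y -> K y.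

Definition cauchy_seq (u : nat -> M) : Prop :=
  forall eps, 0 < eps -> exists N, forall n m, (n >= N)%nat -> (m >= N)%nat -> d (u n) (u m) < eps.

Definition seq_converges (u : nat -> M) : Prop :=
  exists x, Un_cv (fun n => d (u n) x) 0.

Definition equiv_seq (u v : nat -> M) : Prop := Un_cv (fun n => d (u n) (v n)) 0.

Variable G : Type.
Variable mul : G -> G -> G.
Variable e : G.
Variable inv : G -> G.
Variable act : G -> M -> M.
Variable rho : G -> R.

Definition is_group : Prop :=
  (forall a b c, mul (mul a b) c = mul a (mul b c)) /\
  (forall a, mul e a = a) /\ (forall a, mul a e = a) /\
  (forall a, mul (inv a) a = e) /\ (forall a, mul a (inv a) = e).

Inductive generated (S : list G) : G -> Prop :=
  | gen_e : generated S e
  | gen_mul : forall s g, In s S -> generated S g -> generated S (mul s g)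
  | gen_mulinv : forall s g, In s S -> generated S g -> generated S (mul (inv s) g).

Definition finitely_generated : Prop := exists S : list G, forall g, generated S g.

Definition is_action : Prop :=
  (forall x, act e x = x) /\ (forall g h x, act (mul g h) x = act g (act h x)).

Definition acts_freely : Prop := forall g x, act g x = x -> g = e.

Definition properly_discontinuous : Prop :=
  forall K, is_compact K ->
    exists l : list G, forall g, (exists x, K x /\ K (act g x)) -> In g l.

Definition acts_by_homotheties : Prop :=
  forall f, 0 < rho f /\ forall x y, d (act f x) (act f y) = rho f * d x y.

Definition only_identity_isometry : Prop :=
  forall f, (forall x y, d (act f x) (act f y) = d x y) -> f = e.

(* Compactness of M/Γ with the quotient topology: open sets of M/Γ
   correspond to Γ-invariant open sets of M. *)
Definition quotient_compact : Prop :=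
  forall (I : Type) (U : I -> M -> Prop),
    (forall i, is_open (U i)) ->
    (forall i g x, U i x -> U i (act g x)) ->
    (forall x, exists i, U i x) ->
    exists l : list I, forall x, exists i, In i l /\ U i x.

Definition cone_like : Prop :=
  is_metric /\ locally_compact /\ is_group /\ finitely_generated /\
  (exists g, g <> e) /\ is_action /\ acts_freely /\ properly_discontinuous /\
  acts_by_homotheties /\ only_identity_isometry /\ quotient_compact.

End Defs.

From Stdlib Require Import Reals List Lra Classical ClassicalEpsilon
  FunctionalExtensionality.
Open Scope R_scope.

(* Compactness of M/Γ together with local compactness gives a "bounded
   fundamental set": every point z can be written z = f(w) with f ∈ Γ and w
   at bounded distance C from a fixed base point p, where the ball of a fixed
   radius δ around w lies in a compact set.  Write x_n = f_n(w_n) this way.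
   If ρ(f_n) did not tend to 0, then for some large n the pulled-back sequence
   f_n^{-1}(x_m) would be a Cauchy sequence eventually inside the compact
   neighbourhood of w_n, hence convergent, and pushing forward by f_n would
   make x convergent.  So ρ(f_n) → 0, and then
   d(x_n, f_n(p)) = ρ(f_n) d(w_n, p) ≤ ρ(f_n) C → 0.
   The file first proves facts about finite lists, nonnegative sequences and
   Cauchy sequences in metric spaces (a Cauchy sequence eventually in a
   compact set converges; homotheties preserve Cauchy and convergent
   sequences), then the facts about groups acting by homotheties, and
   finally derives the theorem. *)

Lemma list_upper_bound {A} (l : list A) (f : A -> R) :
  exists C, forall a, In a l -> f a <= C.
Proof.
  induction l as [|a l [C HC]].
  - exists 0. intros b [].
  - exists (Rmax (f a) C). intros b [<-|Hb].
    + apply Rmax_l.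
    + eapply Rle_trans; [apply HC, Hb | apply Rmax_r].
Qed.

Lemma list_pos_lower_bound {A} (l : list A) (f : A -> R) :
  (forall a, 0 < f a) -> exists c, 0 < c /\ forall a, In a l -> c <= f a.
Proof.
  intros Hf. induction l as [|a l [c [Hc HC]]].
  - exists 1. split; [lra | intros b []].
  - exists (Rmin (f a) c). split; [apply Rmin_pos; auto|]. intros b [<-|Hb].
    + apply Rmin_l.
    + eapply Rle_trans; [apply Rmin_r | apply HC, Hb].
Qed.

Lemma list_nat_upper_bound {A} (l : list A) (f : A -> nat) :
  exists N, forall a, In a l -> (f a <= N)%nat.
Proof.
  induction l as [|a l [N HN]].
  - exists O. intros b [].
  - exists (Nat.max (f a) N). intros b [<-|Hb].
    + apply Nat.le_max_l.
    + eapply Nat.le_trans; [apply HN, Hb | apply Nat.le_max_r].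
Qed.

Lemma Un_cv_nonneg_0 (a : nat -> R) :
  (forall n, 0 <= a n) ->
  Un_cv a 0 <-> forall eps, 0 < eps -> exists N, forall n, (n >= N)%nat -> a n < eps.
Proof.
  intros Ha. unfold Un_cv, R_dist.
  split; intros H eps Heps; destruct (H eps Heps) as [N HN]; exists N;
    intros n Hn; specialize (HN n Hn);
    rewrite Rminus_0_r, Rabs_right in * by (apply Rle_ge, Ha); exact HN.
Qed.

Section MetricSpace.
Variables (M : Type) (d : M -> M -> R).
Hypothesis Hmet : is_metric M d.

Lemma d_nonneg x y : 0 <= d x y. Proof. apply Hmet. Qed.
Lemma d_refl x : d x x = 0. Proof. apply (proj1 (proj2 Hmet)). reflexivity. Qed.
Lemma d_sym x y : d x y = d y x. Proof. apply Hmet. Qed.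
Lemma d_tri x y z : d x z <= d x y + d y z. Proof. apply Hmet. Qed.

Lemma ball_open y r : is_open M d (ball M d y r).
Proof.
  intros z Hz. unfold ball in *. exists (r - d y z). split; [lra|].
  intros w Hw. pose proof (d_tri y z w). lra.
Qed.

Lemma cauchy_stays_away (u : nat -> M) (z : M) :
  cauchy_seq M d u -> ~ Un_cv (fun n => d (u n) z) 0 ->
  exists r N, 0 < r /\ forall n, (n >= N)%nat -> r <= d (u n) z.
Proof.
  intros Hu Hnz. rewrite Un_cv_nonneg_0 in Hnz by (intro; apply d_nonneg).
  apply not_all_ex_not in Hnz as [eps Hnz].
  apply imply_to_and in Hnz as [Heps Hnz].
  destruct (Hu (eps / 2)) as [N HN]; [lra|].
  assert (Hfar : exists n1, (n1 >= N)%nat /\ eps <= d (u n1) z).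
  { apply NNPP. intros Hnone. apply Hnz. exists N. intros n Hn.
    apply Rnot_le_lt. intros Hle. apply Hnone. exists n. auto. }
  destruct Hfar as [n1 [Hn1 Hfar]].
  exists (eps / 2), N. split; [lra|]. intros n Hn.
  pose proof (HN n1 n Hn1 Hn). pose proof (d_tri (u n1) (u n) z). lra.
Qed.

(* A Cauchy sequence that eventually lies in a compact set converges:
   otherwise the balls on which it eventually does not enter would form an
   open cover of the compact set without a finite subcover. *)
Lemma cauchy_in_compact_converges (u : nat -> M) (K : M -> Prop) (N : nat) :
  cauchy_seq M d u -> is_compact M d K -> (forall m, (m >= N)%nat -> K (u m)) ->
  seq_converges M d u.
Proof.
  intros Hu HK HuK. apply NNPP. intros Hnc.
  assert (Haway : forall z, exists p : R * nat,
             0 < fst p /\ forall n, (n >= snd p)%nat -> fst p <= d (u n) z).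
  { intros z. destruct (cauchy_stays_away u z Hu) as [r [N' H]].
    - intros Hz. apply Hnc. exists z. exact Hz.
    - exists (r, N'). exact H. }
  apply choice in Haway as [rN HrN].
  destruct (HK M (fun z => ball M d z (fst (rN z)))) as [l Hl].
  - intros z. apply ball_open.
  - intros z _. exists z. unfold ball. rewrite d_refl. apply HrN.
  - destruct (list_nat_upper_bound l (fun z => snd (rN z))) as [N' HN'].
    set (n := Nat.max N N').
    destruct (Hl (u n)) as [z [Hzl Hz]]; [apply HuK, Nat.le_max_l|].
    unfold ball in Hz. rewrite d_sym in Hz.
    assert (fst (rN z) <= d (u n) z).
    { apply HrN. eapply Nat.le_trans; [apply (HN' z Hzl) | apply Nat.le_max_r]. }
    lra.
Qed.

Section Homothety.
Variables (f : M -> M) (c : R).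
Hypothesis Hc : 0 < c.
Hypothesis Hf : forall a b, d (f a) (f b) = c * d a b.

Lemma cauchy_homothety (u : nat -> M) :
  cauchy_seq M d u -> cauchy_seq M d (fun n => f (u n)).
Proof.
  intros Hu eps Heps. destruct (Hu (eps / c)) as [N HN].
  { apply Rdiv_lt_0_compat; auto. }
  exists N. intros n m Hn Hm. rewrite Hf.
  specialize (HN n m Hn Hm).
  replace eps with (c * (eps / c)) by (field; lra).
  apply Rmult_lt_compat_l; auto.
Qed.

Lemma converges_homothety (u : nat -> M) :
  seq_converges M d u -> seq_converges M d (fun n => f (u n)).
Proof.
  intros [z Hz]. exists (f z).
  rewrite Un_cv_nonneg_0 in * by (intro; apply d_nonneg).
  intros eps Heps. destruct (Hz (eps / c)) as [N HN].
  { apply Rdiv_lt_0_compat; auto. }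
  exists N. intros n Hn. rewrite Hf. specialize (HN n Hn).
  replace eps with (c * (eps / c)) by (field; lra).
  apply Rmult_lt_compat_l; auto.
Qed.
End Homothety.

Section GroupOfHomotheties.
Variables (G : Type) (mul : G -> G -> G) (e : G) (inv : G -> G)
  (act : G -> M -> M) (rho : G -> R).
Hypothesis Hgrp : is_group G mul e inv.
Hypothesis Hact : is_action M G mul e act.
Hypothesis Hhom : acts_by_homotheties M d G act rho.

Lemma rho_pos g : 0 < rho g. Proof. apply Hhom. Qed.
Lemma dist_act g a b : d (act g a) (act g b) = rho g * d a b. Proof. apply Hhom. Qed.

Lemma act_inv_l g w : act (inv g) (act g w) = w.
Proof.
  destruct Hact as [Hae Ham]. rewrite <- Ham, (proj1 (proj2 (proj2 (proj2 Hgrp)))).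
  apply Hae.
Qed.

Lemma act_inv_r g w : act g (act (inv g) w) = w.
Proof.
  destruct Hact as [Hae Ham]. rewrite <- Ham, (proj2 (proj2 (proj2 (proj2 Hgrp)))).
  apply Hae.
Qed.

Lemma dist_act_inv g a b : d (act (inv g) a) (act (inv g) b) = / rho g * d a b.
Proof.
  pose proof (rho_pos g).
  pose proof (dist_act g (act (inv g) a) (act (inv g) b)) as E.
  rewrite !act_inv_r in E. rewrite E. field. lra.
Qed.

Definition saturated_ball (y : M) (s : R) : M -> Prop :=
  fun z => exists g w, d y w < s /\ z = act g w.

(* Saturations of balls are open: near g(w), pull back by g^{-1}. *)
Lemma saturated_ball_open y s : is_open M d (saturated_ball y s).
Proof.
  intros z [g [w [Hw ->]]].
  pose proof (rho_pos g).
  exists (rho g * (s - d y w)). split; [apply Rmult_lt_0_compat; lra|].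
  intros z' Hz'. unfold ball in Hz'.
  exists g, (act (inv g) z'). split; [|symmetry; apply act_inv_r].
  assert (Hclose : d w (act (inv g) z') < s - d y w).
  { rewrite <- (act_inv_l g w) at 1. rewrite dist_act_inv.
    apply (Rmult_lt_reg_l (rho g)); auto.
    rewrite <- Rmult_assoc, Rinv_r, Rmult_1_l by lra. exact Hz'. }
  pose proof (d_tri y w (act (inv g) z')). lra.
Qed.

(* Bounded fundamental set with uniform compact neighbourhoods: covering
   the quotient by the saturations of small balls around every point and
   extracting a finite subcover, every z is a translate g(w) of a point w at
   distance at most C from p whose δ-ball lies in a compact set. *)
Lemma bounded_fundamental_set (p : M) :
  locally_compact M d -> quotient_compact M d G act ->
  exists delta C, 0 < delta /\
    forall z, exists g w, z = act g w /\ d w p <= C /\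
      exists K, is_compact M d K /\ forall v, ball M d w delta v -> K v.
Proof.
  intros Hlc Hqc.
  assert (Hrad : forall y, exists r, 0 < r /\
             exists K, is_compact M d K /\ forall v, ball M d y r v -> K v).
  { intros y. destruct (Hlc y) as [K [HK [r [Hr HKr]]]]. eauto. }
  apply choice in Hrad as [r Hr].
  destruct (Hqc M (fun y => saturated_ball y (r y / 2))) as [L HL].
  - intros y. apply saturated_ball_open.
  - intros y h z [g [w [Hw ->]]]. exists (mul h g), w.
    split; [exact Hw | symmetry; apply (proj2 Hact)].
  - intros z. exists z, e, z. rewrite d_refl, (proj1 Hact).
    split; [pose proof (proj1 (Hr z)); lra | reflexivity].
  - destruct (list_pos_lower_bound L (fun y => r y / 2)) as [delta [Hdelta HLdelta]].
    { intros y. pose proof (proj1 (Hr y)). lra. }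
    destruct (list_upper_bound L (fun y => r y / 2 + d y p)) as [C HC].
    exists delta, C. split; [exact Hdelta|]. intros z.
    destruct (HL z) as [y [HyL [g [w [Hyw ->]]]]].
    exists g, w. split; [reflexivity|]. split.
    + pose proof (HC y HyL). pose proof (d_tri w y p). rewrite (d_sym w y) in *. lra.
    + destruct (proj2 (Hr y)) as [K [HK HKr]]. exists K. split; [exact HK|].
      intros v Hv. apply HKr. unfold ball in *.
      pose proof (HLdelta y HyL). pose proof (d_tri y w v). simpl in *. lra.
Qed.

(* Core geometric step: if x_m stays within ρ(g)δ of g(w) and the δ-ball
   around w lies in a compact set, then g^{-1}(x_m) is a Cauchy sequence
   eventually in that compact set, so it converges, and so does x. *)
Lemma converges_near_compact (x : nat -> M) g w delta K N :
  cauchy_seq M d x -> is_compact M d K ->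
  (forall v, ball M d w delta v -> K v) ->
  (forall m, (m >= N)%nat -> d (act g w) (x m) < rho g * delta) ->
  seq_converges M d x.
Proof.
  intros Hx HK HKw Hnear. pose proof (rho_pos g) as Hg.
  assert (Hpull_cauchy : cauchy_seq M d (fun m => act (inv g) (x m))).
  { apply (cauchy_homothety (act (inv g)) (/ rho g));
      [apply Rinv_0_lt_compat, Hg | apply dist_act_inv | exact Hx]. }
  assert (Hpull_in_K : forall m, (m >= N)%nat -> K (act (inv g) (x m))).
  { intros m Hm. apply HKw. unfold ball.
    rewrite <- (act_inv_l g w) at 1. rewrite dist_act_inv.
    apply (Rmult_lt_reg_l (rho g)); auto.
    rewrite <- Rmult_assoc, Rinv_r, Rmult_1_l by lra. apply Hnear, Hm. }
  assert (Hpush : seq_converges M d (fun m => act g (act (inv g) (x m)))).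
  { apply (converges_homothety (act g) (rho g)); [exact Hg | apply dist_act|].
    exact (cauchy_in_compact_converges _ K N Hpull_cauchy HK Hpull_in_K). }
  replace x with (fun m => act g (act (inv g) (x m))); [exact Hpush|].
  extensionality m. apply act_inv_r.
Qed.

Lemma ratios_vanish (x : nat -> M) (g : nat -> G) (w : nat -> M) (delta : R) :
  cauchy_seq M d x -> ~ seq_converges M d x -> 0 < delta ->
  (forall n, x n = act (g n) (w n)) ->
  (forall n, exists K, is_compact M d K /\ forall v, ball M d (w n) delta v -> K v) ->
  Un_cv (fun n => rho (g n)) 0.
Proof.
  intros Hx Hnc Hdelta Hxw Hnbhd.
  apply Un_cv_nonneg_0; [intro; apply Rlt_le, rho_pos|].
  intros eps Heps. destruct (Hx (eps * delta)) as [N HN]; [nra|].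
  exists N. intros n Hn. apply Rnot_le_lt. intros Hlarge. apply Hnc.
  destruct (Hnbhd n) as [K [HK HKw]].
  apply (converges_near_compact x (g n) (w n) delta K N Hx HK HKw).
  intros m Hm. rewrite <- Hxw. specialize (HN n m Hn Hm). nra.
Qed.

Lemma equiv_of_vanishing_ratios (x : nat -> M) (g : nat -> G) (w : nat -> M)
  (p : M) (C : R) :
  Un_cv (fun n => rho (g n)) 0 -> (forall n, x n = act (g n) (w n)) ->
  (forall n, d (w n) p <= C) ->
  equiv_seq M d x (fun n => act (g n) p).
Proof.
  intros Hrho Hxw HC. unfold equiv_seq.
  rewrite Un_cv_nonneg_0 in * by (intro; first [apply d_nonneg | apply Rlt_le, rho_pos]).
  intros eps Heps. set (C' := Rmax C 1).
  assert (HC' : 0 < C') by (pose proof (Rmax_r C 1); unfold C'; lra).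
  destruct (Hrho (eps / C')) as [N HN]; [apply Rdiv_lt_0_compat; auto|].
  exists N. intros n Hn. specialize (HN n Hn).
  rewrite Hxw, dist_act.
  pose proof (rho_pos (g n)). pose proof (HC n). pose proof (Rmax_l C 1).
  apply Rle_lt_trans with (rho (g n) * C').
  - apply Rmult_le_compat_l; unfold C'; lra.
  - apply (Rmult_lt_compat_r C') in HN; auto.
    unfold Rdiv in HN. rewrite Rmult_assoc, Rinv_l, Rmult_1_r in HN by lra. exact HN.
Qed.

End GroupOfHomotheties.
End MetricSpace.

Theorem lemma2p3 (M : Type) (d : M -> M -> R) (G : Type)
  (mul : G -> G -> G) (e : G) (inv : G -> G) (act : G -> M -> M) (rho : G -> R)
  (Hcone : cone_like M d G mul e inv act rho)
  (x : nat -> M) (Hx : cauchy_seq M d x) (Hnc : ~ seq_converges M d x) :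
  exists (p : M) (f : nat -> G),
    Un_cv (fun n => rho (f n)) 0 /\
    equiv_seq M d x (fun n => act (f n) p).
Proof.
  destruct Hcone as [Hmet [Hlc [Hgrp [_ [_ [Hact [_ [_ [Hhom [_ Hqc]]]]]]]]]].
  destruct (bounded_fundamental_set M d Hmet G mul e inv act rho Hgrp Hact Hhom
              (x 0%nat) Hlc Hqc) as [delta [C [Hdelta Hfund]]].
  assert (Hdecomp : forall n, exists gw : G * M, x n = act (fst gw) (snd gw) /\
            d (snd gw) (x 0%nat) <= C /\
            exists K, is_compact M d K /\ forall v, ball M d (snd gw) delta v -> K v).
  { intros n. destruct (Hfund (x n)) as [g [w Hgw]]. exists (g, w). exact Hgw. }
  apply choice in Hdecomp as [gw Hgw].
  set (f := fun n => fst (gw n)). set (w := fun n => snd (gw n)).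
  assert (Hrho : Un_cv (fun n => rho (f n)) 0).
  { apply (ratios_vanish M d Hmet G mul e inv act rho Hgrp Hact Hhom x f w delta);
      auto; intro n; apply Hgw. }
  exists (x 0%nat), f. split; [exact Hrho|].
  apply (equiv_of_vanishing_ratios M d Hmet G act rho Hhom
           x f w (x 0%nat) C Hrho); intro n; apply Hgw.
Qed.
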